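(* Let $G$ be a countable graph. The following are equivalent: (i) there exists a countable graph $G'$ such that $G$ and $G'$ are independent, i.e. $G \not\to G'$ and $G' \not\to G$; (ii) $G$ is not bipartite and $G$ does not contain $K_\omega$ as a subgraph.
   Context: All graphs are simple, undirected and loopless. A homomorphism $f: G \to G'$ is a map $V(G) \to V(G')$ such that $\{x,y\} \in E(G)$ implies $\{f(x),f(y)\} \in E(G')$. We write $G \to G'$ (or $G \le G'$) if a homomorphism exists, and $G \not\to G'$ otherwise. $K_\omega$ denotes the countably infinite complete graph. A set of graphs is independent if there is no homomorphism between any two distinct members of the set. *)

From Stdlib Require Import Arith.

Record graph : Type := Graph {
  vert : Type;
  adj : vert -> vert -> Prop;
  adj_sym : forall x y, adj x y -> adj y x;
  adj_irrefl : forall x, ~ adj x x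
}.

Definition countable_graph (G : graph) : Prop :=
  exists f : vert G -> nat, forall x y, f x = f y -> x = y.

Definition is_hom (G H : graph) (f : vert G -> vert H) : Prop :=
  forall x y, adj G x y -> adj H (f x) (f y).

Definition hom (G H : graph) : Prop := exists f : vert G -> vert H, is_hom G H f.

Definition independent (G H : graph) : Prop := ~ hom G H /\ ~ hom H G.

Definition bipartite (G : graph) : Prop :=
  exists c : vert G -> bool, forall x y, adj G x y -> c x <> c y.

Definition Komega_adj (i j : nat) : Prop := i <> j.
Lemma Komega_sym : forall i j, Komega_adj i j -> Komega_adj j i.
Proof. unfold Komega_adj; intros i j H E; apply H; now symmetry. Qed.
Lemma Komega_irrefl : forall i, ~ Komega_adj i i.
Proof. unfold Komega_adj; intros i H; now apply H. Qed.
Definition Komega : graph := Graph nat Komega_adj Komega_sym Komega_irrefl.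

(* H is (isomorphic to) a (not necessarily induced) subgraph of G:
   an injective homomorphism H -> G exists. *)
Definition contains_subgraph (G H : graph) : Prop :=
  exists f : vert H -> vert G, (forall x y, f x = f y -> x = y) /\ is_hom H G f.

From Stdlib Require Import Arith Lia List Bool Classical ClassicalEpsilon
  FunctionalExtensionality PropExtensionality ProofIrrelevance Cantor FinFun.
Import ListNotations.

(* (i) => (ii): a bipartite graph G is comparable with every graph (it maps to any graph
   with an edge, and an edgeless graph maps to it), and every countable graph maps to K_omega,
   hence into any G containing K_omega.

   (ii) => (i): if G is finitely colourable, let n be the length of an odd closed walk in G and
   take the n-th shift graph (the n-th iterated line digraph of the transitive tournament on
   nat): each iteration raises the odd girth by two and keeps the chromatic number infinite.
   Otherwise, if the shift graph S_1 maps to G, take the graph of finite cliques of G under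
   the proper-suffix relation: a homomorphism from it to G, or from S_1 to it, builds an
   infinite clique in G step by step.  If instead G maps to S_1, take a triangle (S_1 has odd
   girth 5); and if neither holds, take S_1 itself. *)

Lemma hom_trans (G H K : graph) : hom G H -> hom H K -> hom G K.
Proof. intros [f Hf] [g Hg]. exists (fun x => g (f x)). intros x y Hxy. auto. Qed.

Lemma countable_hom_Komega (G : graph) : countable_graph G -> hom G Komega.
Proof.
  intros [c Hc]. exists c. intros x y Hxy E.
  apply Hc in E. subst. exact (adj_irrefl G y Hxy).
Qed.

Lemma contains_subgraph_hom (G H : graph) : contains_subgraph G H -> hom H G.
Proof. intros [f [_ Hf]]. exists f. exact Hf. Qed.

Lemma bipartite_hom_or_hom_back (G G' : graph) : bipartite G -> hom G G' \/ hom G' G.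
Proof.
  intros [c Hc].
  destruct (classic (exists a b, adj G' a b)) as [[a [b Hab]]|Hedgeless].
  - left. exists (fun x => if c x then a else b). intros x y Hxy.
    specialize (Hc x y Hxy). destruct (c x), (c y); try congruence; eauto using adj_sym.
  - destruct (classic (inhabited (vert G))) as [[v]|Hempty].
    + right. exists (fun _ => v). intros x y Hxy. exfalso. eauto.
    + left. exists (fun x => False_rect _ (Hempty (inhabits x))).
      intros x. contradiction (Hempty (inhabits x)).
Qed.

Inductive walk (G : graph) : vert G -> vert G -> nat -> Prop :=
  | walk_nil x : walk G x x 0
  | walk_cons x y z n : adj G x y -> walk G y z n -> walk G x z (S n).
Arguments walk_nil {G} x.
Arguments walk_cons {G x y z n} _ _.

Lemma walk_app (G : graph) x y z m n : walk G x y m -> walk G y z n -> walk G x z (m + n).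
Proof. induction 1; intros; simpl; [assumption|]. eapply walk_cons; eauto. Qed.

Lemma walk_snoc (G : graph) x y z n : walk G x y n -> adj G y z -> walk G x z (S n).
Proof.
  intros Hw Hyz. rewrite <- Nat.add_1_r.
  exact (walk_app G x y z n 1 Hw (walk_cons Hyz (walk_nil z))).
Qed.

Lemma walk_rev (G : graph) x y n : walk G x y n -> walk G y x n.
Proof.
  induction 1; [constructor|].
  eapply walk_snoc; eauto. apply adj_sym; assumption.
Qed.

Lemma walk_hom (G H : graph) (f : vert G -> vert H) x y n :
  is_hom G H f -> walk G x y n -> walk H (f x) (f y) n.
Proof. intros Hf. induction 1; econstructor; eauto. Qed.

Definition odd_closed_walk (G : graph) (n : nat) : Prop :=
  Nat.Odd n /\ exists x, walk G x x n.

Lemma odd_closed_walk_hom (G H : graph) n : hom G H -> odd_closed_walk G n -> odd_closed_walk H n.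
Proof. intros [f Hf] [Hn [x Hx]]. split; [assumption|]. exists (f x). eapply walk_hom; eauto. Qed.

Lemma odd_closed_walk_ge3 (G : graph) n : odd_closed_walk G n -> 3 <= n.
Proof.
  intros [[k ->] [x Hx]].
  destruct k; [|lia]. simpl in Hx.
  inversion Hx as [|? y ? ? Hxy Hyx]; subst. inversion Hyx; subst.
  destruct (adj_irrefl G x Hxy).
Qed.

(* Two-colour each component by the parity of the length of some walk from a chosen root. *)
Lemma bipartite_of_no_odd_closed_walk (G : graph) :
  (forall n, ~ odd_closed_walk G n) -> bipartite G.
Proof.
  intros Hno.
  set (root := fun x : vert G => epsilon (inhabits x) (fun r => exists n, walk G r x n)).
  assert (Hroot : forall x, exists n, walk G (root x) x n).
  { intro x. apply (epsilon_spec (inhabits x) (fun r => exists n, walk G r x n)).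
    exists x, 0. constructor. }
  assert (Hroot_adj : forall x y, adj G x y -> root x = root y).
  { intros x y Hxy. unfold root.
    replace (fun r => exists n, walk G r x n) with (fun r => exists n, walk G r y n).
    - apply epsilon_inh_irrelevance. exists y, 0. constructor.
    - extensionality r. apply propositional_extensionality.
      split; intros [n Hn]; exists (S n); eapply walk_snoc; eauto.
      apply adj_sym; assumption. }
  set (len := fun x => epsilon (inhabits 0) (fun n => walk G (root x) x n)).
  assert (Hlen : forall x, walk G (root x) x (len x)).
  { intro x. apply (epsilon_spec (inhabits 0) (fun n => walk G (root x) x n)), Hroot. }
  exists (fun x => Nat.even (len x)). intros x y Hxy Hpar.
  apply (Hno (len x + S (len y))). split.
  - apply Nat.odd_spec. rewrite Nat.odd_add, Nat.odd_succ, <- Hpar, <- Nat.negb_even.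
    destruct (Nat.even (len x)); reflexivity.
  - exists (root x). apply (walk_app G _ x).
    + apply Hlen.
    + apply (walk_cons Hxy). rewrite (Hroot_adj x y Hxy). apply walk_rev, Hlen.
Qed.

Lemma not_bipartite_odd_closed_walk (G : graph) : ~ bipartite G -> exists n, odd_closed_walk G n.
Proof.
  intros Hnb. apply NNPP. intros Hno. apply Hnb, bipartite_of_no_odd_closed_walk.
  intros n Hn. apply Hno. exists n. exact Hn.
Qed.

Lemma walk_seq (G : graph) x z n : walk G x z n ->
  exists v : nat -> vert G, v 0 = x /\ v n = z /\ forall i, i < n -> adj G (v i) (v (S i)).
Proof.
  induction 1 as [x|x y z n Hxy _ [v [Hv0 [Hvn Hv]]]].
  - exists (fun _ => x). repeat split. intros i Hi. lia.
  - exists (fun i => match i with 0 => x | S i => v i end). repeat split; [assumption|].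
    intros [|i] Hi; [rewrite Hv0; assumption|]. apply Hv. lia.
Qed.

Lemma seq_walk (G : graph) (w : nat -> vert G) :
  (forall i, adj G (w i) (w (S i))) -> forall k m, walk G (w k) (w (k + m)) m.
Proof.
  intros Hw k m. revert k. induction m as [|m IH]; intro k.
  - rewrite Nat.add_0_r. constructor.
  - apply (walk_cons (Hw k)). replace (k + S m) with (S k + m) by lia. apply IH.
Qed.

Lemma argmax_below (f : nat -> nat) n : 0 < n -> exists r, r < n /\ forall s, s < n -> f s <= f r.
Proof.
  induction n as [|n IH]; intro Hn; [lia|].
  destruct (Nat.eq_dec n 0) as [->|Hn0].
  - exists 0. split; [lia|]. intros s Hs. replace s with 0 by lia. reflexivity.
  - destruct IH as [r [Hr Hmax]]; [lia|].
    destruct (Nat.le_gt_cases (f n) (f r)) as [Hle|Hgt].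
    + exists r. split; [lia|]. intros s Hs.
      destruct (Nat.eq_dec s n) as [->|]; [assumption|]. apply Hmax. lia.
    + exists n. split; [lia|]. intros s Hs.
      destruct (Nat.eq_dec s n) as [->|]; [reflexivity|]. specialize (Hmax s). lia.
Qed.

(* Read the closed walk as an n-periodic sequence and rotate it to a position of maximal height. *)
Lemma closed_walk_peak (G : graph) (h : vert G -> nat) x n :
  walk G x x n -> 0 < n ->
  exists y a c m, n = S (S m) /\ adj G y a /\ walk G a c m /\ adj G c y /\
    h a <= h y /\ h c <= h y.
Proof.
  intros Hwalk Hn. destruct (walk_seq G x x n Hwalk) as [v [Hv0 [Hvn Hv]]].
  set (w := fun i => v (i mod n)).
  assert (Hmod : forall i, i mod n < n) by (intro; apply Nat.mod_upper_bound; lia).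
  assert (Hw : forall i, adj G (w i) (w (S i))).
  { intro i. unfold w. rewrite <- Nat.add_1_r, <- Nat.Div0.add_mod_idemp_l.
    specialize (Hmod i). remember (i mod n) as r eqn:Er. clear Er.
    destruct (Nat.eq_dec (S r) n) as [E|E].
    - assert (Hlast := Hv r Hmod). rewrite E, Hvn, <- Hv0 in Hlast.
      rewrite Nat.add_1_r, E, Nat.Div0.mod_same. exact Hlast.
    - rewrite Nat.mod_small by lia. rewrite Nat.add_1_r. apply Hv. assumption. }
  destruct (argmax_below (fun i => h (v i)) n Hn) as [r [Hr Hmax]].
  assert (Hpeak : forall j, h (w j) <= h (w r)).
  { intro j. unfold w. rewrite (Nat.mod_small r n Hr). apply Hmax, Hmod. }
  destruct n as [|[|m]]; [lia| |].
  - exfalso. apply (adj_irrefl G (w r)). specialize (Hw r).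
    unfold w in *. rewrite !Nat.mod_1_r in *. exact Hw.
  - exists (w r), (w (S r)), (w (r + S m)), m. repeat split.
    + apply Hw.
    + replace (r + S m) with (S r + m) by lia. apply seq_walk, Hw.
    + replace (w r) with (w (S (r + S m))); [apply Hw|].
      unfold w. replace (S (r + S m)) with (r + 1 * S (S m)) by lia.
      rewrite Nat.Div0.mod_add. reflexivity.
    + apply Hpeak.
    + apply Hpeak.
Qed.

Record ranked_dag : Type := RankedDag {
  node : Type;
  arc : node -> node -> Prop;
  rank : node -> nat;
  rank_arc : forall u v, arc u v -> rank u < rank v
}.

Definition dag_adj (D : ranked_dag) (u v : node D) : Prop := arc D u v \/ arc D v u.

Lemma dag_adj_sym (D : ranked_dag) u v : dag_adj D u v -> dag_adj D v u.
Proof. unfold dag_adj. tauto. Qed.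

Lemma dag_adj_irrefl (D : ranked_dag) u : ~ dag_adj D u u.
Proof. intros [H|H]; apply rank_arc in H; lia. Qed.

Definition underlying (D : ranked_dag) : graph :=
  Graph (node D) (dag_adj D) (dag_adj_sym D) (dag_adj_irrefl D).

Definition arcs (D : ranked_dag) : Type := {p : node D * node D | arc D (fst p) (snd p)}.

Definition tail {D : ranked_dag} (e : arcs D) : node D := fst (proj1_sig e).
Definition head {D : ranked_dag} (e : arcs D) : node D := snd (proj1_sig e).
Definition arc_end {D : ranked_dag} (e : arcs D) (b : bool) : node D :=
  if b then head e else tail e.

Lemma line_rank_arc (D : ranked_dag) (e e' : arcs D) :
  head e = tail e' -> rank D (tail e) < rank D (tail e').
Proof. intros E. rewrite <- E. apply rank_arc, (proj2_sig e). Qed.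

Definition line_dag (D : ranked_dag) : ranked_dag :=
  RankedDag (arcs D) (fun e e' => head e = tail e') (fun e => rank D (tail e)) (line_rank_arc D).

Lemma arc_end_walk (D : ranked_dag) (e : arcs D) b b' :
  exists j, walk (underlying D) (arc_end e b) (arc_end e b') j /\ j <= 1 /\
    Nat.odd j = xorb b b'.
Proof.
  assert (Harc : arc D (tail e) (head e)) by exact (proj2_sig e).
  destruct b, b'; simpl.
  - exists 0. repeat constructor.
  - exists 1. repeat split; [|lia].
    exact (walk_cons (G := underlying D) (or_intror Harc) (walk_nil _)).
  - exists 1. repeat split; [|lia].
    exact (walk_cons (G := underlying D) (or_introl Harc) (walk_nil _)).
  - exists 0. repeat constructor.
Qed.

Lemma line_adj_shared_end (D : ranked_dag) (e e' : arcs D) :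
  adj (underlying (line_dag D)) e e' -> exists d, arc_end e d = arc_end e' (negb d).
Proof. intros [H|H]; [exists true|exists false]; simpl; congruence. Qed.

(* Consecutive arcs share an endpoint, so each step costs at most one edge of D: the arc itself. *)
Lemma line_walk_lift (D : ranked_dag) e f n :
  walk (underlying (line_dag D)) e f n -> forall b b',
  exists j, walk (underlying D) (arc_end e b) (arc_end f b') j /\ j <= S n /\
    Nat.odd j = xorb (Nat.odd n) (xorb b b').
Proof.
  induction 1 as [e|e e1 f n He _ IH]; intros b b'.
  - destruct (arc_end_walk D e b b') as [j [Hj [Hj1 Hjodd]]].
    exists j. repeat split; assumption.
  - destruct (line_adj_shared_end D e e1 He) as [d Hd].
    destruct (arc_end_walk D e b d) as [j0 [Hj0 [Hj01 Hj0odd]]].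
    destruct (IH (negb d) b') as [j [Hj [Hjn Hjodd]]].
    exists (j0 + j). repeat split.
    + apply (walk_app (underlying D) _ (arc_end e d)); [assumption|]. rewrite Hd. assumption.
    + lia.
    + rewrite Nat.odd_add, Hj0odd, Hjodd, Nat.odd_succ, <- Nat.negb_odd.
      destruct b, d, b', (Nat.odd n); reflexivity.
Qed.

(* At a peak of the rank the walk arrives by a forward step and leaves by a backward one,
   so both neighbouring arcs end at the tail of the peak arc, and the rest of the walk lifts
   to a closed walk there of the same parity and at most n - 2 steps. *)
Lemma line_dag_odd_closed_walk (D : ranked_dag) n :
  odd_closed_walk (underlying (line_dag D)) n ->
  exists j, j + 2 <= n /\ odd_closed_walk (underlying D) j.
Proof.
  intros [[k Hk] [e He]].
  destruct (closed_walk_peak (underlying (line_dag D)) (rank (line_dag D)) e n He) as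
    (y & a & c & m & -> & Hya & Hac & Hcy & Ha & Hc); [lia|].
  assert (Hay : head a = tail y).
  { destruct Hya as [H|H]; [apply rank_arc in H; lia|exact H]. }
  assert (Hcy' : head c = tail y).
  { destruct Hcy as [H|H]; [exact H|apply rank_arc in H; lia]. }
  destruct (line_walk_lift D a c m Hac true true) as [j [Hj [Hjm Hjodd]]].
  simpl in Hj. rewrite Hay, Hcy' in Hj.
  rewrite xorb_nilpotent, xorb_false_r in Hjodd.
  assert (Hm : Nat.Odd m) by (exists (k - 1); lia).
  assert (Hjo : Nat.Odd j) by (apply Nat.odd_spec; rewrite Hjodd; apply Nat.odd_spec; exact Hm).
  exists j. split.
  - destruct Hm as [p ->]. destruct Hjo as [q ->]. lia.
  - split; [assumption|]. exists (tail y). exact Hj.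
Qed.

Definition tournament : ranked_dag := RankedDag nat lt (fun n => n) (fun _ _ H => H).

Fixpoint shift_dag (k : nat) : ranked_dag :=
  match k with
  | 0 => tournament
  | S k => line_dag (shift_dag k)
  end.

Definition shift_graph (k : nat) : graph := underlying (shift_dag k).

Lemma shift_graph_odd_girth k n : odd_closed_walk (shift_graph k) n -> 2 * k + 3 <= n.
Proof.
  revert n. induction k as [|k IH]; intros n Hn.
  - apply odd_closed_walk_ge3 in Hn. lia.
  - destruct (line_dag_odd_closed_walk _ n Hn) as [j [Hj Hjw]].
    specialize (IH j Hjw). lia.
Qed.

Lemma sig_code_inj {A : Type} (P : A -> Prop) (c : A -> nat) :
  (forall x y, c x = c y -> x = y) ->
  forall u v : {x | P x}, c (proj1_sig u) = c (proj1_sig v) -> u = v.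
Proof.
  intros Hc [x Hx] [y Hy] E. simpl in E. apply Hc in E. subst.
  apply subset_eq_compat. reflexivity.
Qed.

Lemma line_dag_countable (D : ranked_dag) :
  countable_graph (underlying D) -> countable_graph (underlying (line_dag D)).
Proof.
  intros [c Hc].
  exists (fun e : arcs D => Cantor.to_nat (c (fst (proj1_sig e)), c (snd (proj1_sig e)))).
  apply (sig_code_inj _ (fun p => Cantor.to_nat (c (fst p), c (snd p)))).
  intros [x1 x2] [y1 y2] E. apply Cantor.to_nat_inj in E. simpl in E.
  injection E as E1 E2. apply Hc in E1, E2. subst. reflexivity.
Qed.

Lemma shift_graph_countable k : countable_graph (shift_graph k).
Proof.
  induction k as [|k IH].
  - exists (fun n => n). auto.
  - apply line_dag_countable, IH.
Qed.

Definition finitely_colorable (G : graph) : Prop :=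
  exists (T : Type) (palette : list T) (c : vert G -> T),
    (forall x, In (c x) palette) /\ (forall x y, adj G x y -> c x <> c y).

Lemma finitely_colorable_hom (G H : graph) :
  hom G H -> finitely_colorable H -> finitely_colorable G.
Proof.
  intros [f Hf] [T [palette [c [Hpal Hc]]]].
  exists T, palette, (fun x => c (f x)). split; auto.
Qed.

Fixpoint bool_lists (n : nat) : list (list bool) :=
  match n with
  | 0 => [[]]
  | S n => flat_map (fun s => [true :: s; false :: s]) (bool_lists n)
  end.

Lemma in_bool_lists (s : list bool) : In s (bool_lists (length s)).
Proof.
  induction s as [|b s IH]; simpl; [auto|].
  apply in_flat_map. exists s. split; [assumption|]. destruct b; simpl; auto.
Qed.

(* Colour a node by the set of colours of the arcs leaving it: the colour of an arc
   u -> v occurs at u but not at v, since arcs leaving v are adjacent to it. *)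
Lemma line_dag_colorable (D : ranked_dag) :
  finitely_colorable (underlying (line_dag D)) -> finitely_colorable (underlying D).
Proof.
  intros [T [palette [c [Hpal Hc]]]].
  set (out := fun (u : node D) (t : T) =>
    if excluded_middle_informative (exists e, tail e = u /\ c e = t) then true else false).
  assert (Hout : forall e : arcs D, out (tail e) (c e) <> out (head e) (c e)).
  { intros e. unfold out.
    destruct (excluded_middle_informative (exists e', tail e' = tail e /\ c e' = c e))
      as [_|Hno]; [|exfalso; eauto].
    destruct (excluded_middle_informative (exists e', tail e' = head e /\ c e' = c e))
      as [[e' [Ee' Ce']]|_]; [|discriminate].
    exfalso. apply (Hc e e'); [left; simpl; congruence|congruence]. }
  exists (list bool), (bool_lists (length palette)), (fun u => map (out u) palette). split.
  - intros u. rewrite <- (length_map (out u)). apply in_bool_lists.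
  - assert (Harc : forall u v, arc D u v -> map (out u) palette <> map (out v) palette).
    { intros u v Huv E. apply map_ext_in_iff with (a := c (exist _ (u, v) Huv)) in E; [|apply Hpal].
      exact (Hout (exist _ (u, v) Huv) E). }
    intros u v [H|H]; [|apply not_eq_sym]; apply Harc; exact H.
Qed.

Lemma tournament_not_colorable : ~ finitely_colorable (underlying tournament).
Proof.
  intros [T [palette [c [Hpal Hc]]]].
  assert (Hinj : Injective c).
  { intros u v E. destruct (Nat.lt_trichotomy u v) as [H|[H|H]]; [| assumption |];
      exfalso; refine (Hc _ _ _ E); [left|right]; exact H. }
  assert (Hnodup := Injective_map_NoDup Hinj (seq_NoDup (S (length palette)) 0)).
  assert (Hincl : incl (map c (seq 0 (S (length palette)))) palette).
  { intros t Ht. apply in_map_iff in Ht. destruct Ht as [x [<- _]]. apply Hpal. }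
  apply (NoDup_incl_length Hnodup) in Hincl. rewrite length_map, length_seq in Hincl. lia.
Qed.

Lemma shift_graph_not_colorable k : ~ finitely_colorable (shift_graph k).
Proof.
  induction k as [|k IH].
  - exact tournament_not_colorable.
  - intros Hcol. apply IH, line_dag_colorable, Hcol.
Qed.

Section CliqueGraph.

Variable G : graph.

Definition clique (s : list (vert G)) : Prop := ForallOrdPairs (adj G) s.

Definition suffix (s t : list (vert G)) : Prop := exists p, t = p ++ s.

Definition strict_suffix (s t : list (vert G)) : Prop := exists p, p <> [] /\ t = p ++ s.

Definition suffix_comparable (s t : list (vert G)) : Prop :=
  strict_suffix s t \/ strict_suffix t s.

Lemma strict_suffix_irrefl s : ~ strict_suffix s s.
Proof.
  intros [p [Hp E]]. apply (f_equal (@length _)) in E. rewrite length_app in E.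
  destruct p; [contradiction|simpl in E; lia].
Qed.

Lemma strict_suffix_cons x s t : strict_suffix s t -> strict_suffix s (x :: t).
Proof. intros [p [_ ->]]. exists (x :: p). split; [discriminate|reflexivity]. Qed.

Lemma suffix_comparable_sym s t : suffix_comparable s t -> suffix_comparable t s.
Proof. unfold suffix_comparable. tauto. Qed.

Lemma suffix_comparable_irrefl s : ~ suffix_comparable s s.
Proof. intros [H|H]; exact (strict_suffix_irrefl s H). Qed.

Lemma clique_suffix s t : suffix s t -> clique t -> clique s.
Proof.
  intros [p ->]. induction p as [|x p IH]; simpl; [auto|].
  intros H. inversion H. auto.
Qed.

Definition clique_graph : graph :=
  Graph {s | clique s} (fun u v => suffix_comparable (proj1_sig u) (proj1_sig v))
    (fun u v => suffix_comparable_sym (proj1_sig u) (proj1_sig v))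
    (fun u => suffix_comparable_irrefl (proj1_sig u)).

Fixpoint list_code {A : Type} (c : A -> nat) (l : list A) : nat :=
  match l with
  | [] => 0
  | x :: l => S (Cantor.to_nat (c x, list_code c l))
  end.

Lemma list_code_inj {A : Type} (c : A -> nat) :
  (forall x y, c x = c y -> x = y) -> forall l l', list_code c l = list_code c l' -> l = l'.
Proof.
  intros Hc. induction l as [|x l IH]; intros [|x' l'] E; cbn [list_code] in E;
    try discriminate; [reflexivity|].
  apply Nat.succ_inj, Cantor.to_nat_inj in E. injection E as Ex El.
  apply Hc in Ex. apply IH in El. subst. reflexivity.
Qed.

Lemma clique_graph_countable : countable_graph G -> countable_graph clique_graph.
Proof.
  intros [c Hc]. exists (fun u : {s | clique s} => list_code c (proj1_sig u)).
  apply sig_code_inj, list_code_inj, Hc.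
Qed.

Lemma Komega_of_clique_extension (P : list (vert G) -> Prop) :
  P [] -> (forall s, P s -> exists x, P (x :: s) /\ Forall (adj G x) s) ->
  contains_subgraph G Komega.
Proof.
  intros H0 Hext. destruct (Hext [] H0) as [x0 _].
  set (ext := fun s => epsilon (inhabits x0) (fun x => P (x :: s) /\ Forall (adj G x) s)).
  assert (Hext' : forall s, P s -> P (ext s :: s) /\ Forall (adj G (ext s)) s).
  { intros s Hs. apply (epsilon_spec (inhabits x0) (fun x => P (x :: s) /\ Forall (adj G x) s)).
    apply Hext, Hs. }
  set (chain := fun n => Nat.iter n (fun s => ext s :: s) []).
  assert (Hchain : forall n, P (chain n)).
  { induction n as [|n IH]; [exact H0|apply (Hext' _ IH)]. }
  set (a := fun n => ext (chain n)).
  assert (Hin : forall i j, i < j -> In (a i) (chain j)).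
  { intros i j. induction j as [|j IH]; intros Hij; [lia|].
    destruct (Nat.eq_dec i j) as [->|Hne]; [left; reflexivity|right; apply IH; lia]. }
  assert (Hlt : forall i j, i < j -> adj G (a j) (a i)).
  { intros i j Hij. apply (proj1 (Forall_forall _ _) (proj2 (Hext' _ (Hchain j)))), Hin, Hij. }
  assert (Hne : forall i j, i <> j -> adj G (a i) (a j)).
  { intros i j Hij. destruct (Nat.lt_gt_cases i j) as [[H|H] _]; [exact Hij| |];
      [apply adj_sym|]; apply Hlt; exact H. }
  exists a. split.
  - intros i j E. destruct (Nat.eq_dec i j) as [|Hij]; [assumption|].
    exfalso. apply (adj_irrefl G (a i)). rewrite E at 2. apply Hne, Hij.
  - intros i j Hij. apply Hne, Hij.
Qed.

Lemma clique_graph_hom_Komega : hom clique_graph G -> contains_subgraph G Komega.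
Proof.
  intros [f Hf].
  apply (Komega_of_clique_extension (fun s => clique s /\ forall y, In y s ->
    exists t (Ht : clique t), strict_suffix t s /\ y = f (exist _ t Ht))).
  - split; [constructor|intros y []].
  - intros s [Hs Hgen]. exists (f (exist _ s Hs)).
    assert (Hadj : Forall (adj G (f (exist _ s Hs))) s).
    { apply Forall_forall. intros y Hy. destruct (Hgen y Hy) as [t [Ht [Hts ->]]].
      apply Hf. right. exact Hts. }
    split; [split|exact Hadj].
    + constructor; assumption.
    + intros y [<-|Hy].
      * exists s, Hs. split; [|reflexivity].
        exists [f (exist _ s Hs)]. split; [discriminate|reflexivity].
      * destruct (Hgen y Hy) as [t [Ht [Hts Hyt]]]. exists t, Ht. split; [|assumption].
        apply strict_suffix_cons, Hts.
Qed.

Definition unbounded (A : nat -> Prop) : Prop := forall N, exists a, N <= a /\ A a.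

(* Either infinitely many elements of A start no R-edge inside A, or beyond some N every
   element starts one; in the latter case an R-edge between two elements beyond N would
   extend to a path of length two. *)
Lemma unbounded_avoid (A : nat -> Prop) (R : nat -> nat -> Prop) :
  unbounded A ->
  (forall i j k, A i -> A j -> A k -> i < j -> j < k -> R i j -> R j k -> False) ->
  exists B, unbounded B /\ (forall a, B a -> A a) /\
    forall a b, B a -> B b -> a < b -> ~ R a b.
Proof.
  intros HA Hpath.
  destruct (classic (unbounded (fun j => A j /\ forall k, A k -> j < k -> ~ R j k)))
    as [Hfree|Hfree].
  - exists (fun j => A j /\ forall k, A k -> j < k -> ~ R j k).
    split; [assumption|split]; [tauto|]. intros a b [_ Ha] [Hb _]. auto.
  - apply not_all_ex_not in Hfree as [N HN].
    exists (fun a => A a /\ N <= a). split; [|split]; [|tauto|].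
    + intros M. destruct (HA (N + M)) as [a [Ha HAa]]. exists a. repeat split; [lia|assumption|lia].
    + intros a b [Ha Hna] [Hb Hnb] Hab Rab. apply HN.
      exists b. split; [assumption|split; [assumption|]].
      intros k Hk Hbk Rbk. exact (Hpath a b k Ha Hb Hk Hab Hbk Rab Rbk).
Qed.

Section SuffixSystem.

Variable f : nat -> nat -> list (vert G).
Hypothesis f_clique : forall i j, i < j -> clique (f i j).
Hypothesis f_comparable : forall i j k, i < j -> j < k -> suffix_comparable (f i j) (f j k).

Definition common_suffix (A : nat -> Prop) (s : list (vert G)) : Prop :=
  forall a b, A a -> A b -> a < b -> suffix s (f a b).

Lemma suffix_propagate x s u v :
  suffix (x :: s) u -> strict_suffix s v -> suffix_comparable u v -> suffix (x :: s) v.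
Proof.
  intros [q ->] [p [Hp ->]] [[r [_ E]]|[r [_ E]]].
  - exists (r ++ q). rewrite E, <- app_assoc. reflexivity.
  - destruct (exists_last Hp) as [p' [y ->]].
    rewrite <- !app_assoc in E. simpl in E.
    assert (E' : q ++ [x] = (r ++ p') ++ [y]).
    { apply (app_inv_tail s). rewrite <- !app_assoc. simpl. rewrite E, app_assoc. reflexivity. }
    apply app_inj_tail in E' as [_ ->]. exists p'. rewrite <- app_assoc. reflexivity.
Qed.

(* After discarding the pairs whose value is exactly s, all values strictly extend s; the
   element preceding s in one of them then spreads to all of them along comparable pairs. *)
Lemma common_suffix_extend A s :
  unbounded A -> common_suffix A s -> exists x B, unbounded B /\ common_suffix B (x :: s).
Proof.
  intros HA Hs.
  destruct (unbounded_avoid A (fun a b => f a b = s) HA) as [B [HB [HBA HBs]]].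
  { intros i j k _ _ _ Hij Hjk E1 E2. apply (suffix_comparable_irrefl s).
    rewrite <- E1 at 1. rewrite <- E2. apply f_comparable; assumption. }
  assert (Hstrict : forall a b, B a -> B b -> a < b -> strict_suffix s (f a b)).
  { intros a b Ha Hb Hab. destruct (Hs a b (HBA a Ha) (HBA b Hb) Hab) as [p Ep].
    exists p. split; [|assumption]. intros ->. exact (HBs a b Ha Hb Hab Ep). }
  destruct (HB 0) as [a0 [_ Ha0]]. destruct (HB (S a0)) as [a1 [Ha01 Ha1]].
  destruct (Hstrict a0 a1 Ha0 Ha1 Ha01) as [p [Hp E01]].
  destruct (exists_last Hp) as [q [x ->]].
  exists x, B. split; [assumption|].
  assert (Hspread : forall u c d, B c -> B d -> c < d -> suffix (x :: s) u ->
    suffix_comparable u (f c d) -> suffix (x :: s) (f c d)).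
  { intros u c d Hc Hd Hcd Hu. apply suffix_propagate; [assumption|]. apply Hstrict; assumption. }
  intros a b Ha Hb Hab.
  destruct (HB (S (a1 + b))) as [c [Hc HBc]]. destruct (HB (S c)) as [d [Hd HBd]].
  assert (H01 : suffix (x :: s) (f a0 a1)).
  { exists q. rewrite E01, <- app_assoc. reflexivity. }
  assert (H1c : suffix (x :: s) (f a1 c)).
  { apply (Hspread (f a0 a1)); try assumption; try lia. apply f_comparable; lia. }
  assert (Hcd : suffix (x :: s) (f c d)).
  { apply (Hspread (f a1 c)); try assumption; try lia. apply f_comparable; lia. }
  assert (Hbc : suffix (x :: s) (f b c)).
  { apply (Hspread (f c d)); try assumption; try lia.
    apply suffix_comparable_sym, f_comparable; lia. }
  apply (Hspread (f b c)); try assumption. apply suffix_comparable_sym, f_comparable; lia.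
Qed.

Lemma suffix_system_Komega : contains_subgraph G Komega.
Proof.
  apply (Komega_of_clique_extension (fun s => exists A, unbounded A /\ common_suffix A s)).
  - exists (fun _ => True). split.
    + intros N. exists N. auto.
    + intros a b _ _ _. exists (f a b). rewrite app_nil_r. reflexivity.
  - intros s [A [HA Hs]]. destruct (common_suffix_extend A s HA Hs) as [x [B [HB HBx]]].
    exists x. split; [exists B; auto|].
    destruct (HB 0) as [a [_ Ha]]. destruct (HB (S a)) as [b [Hab Hb]].
    assert (Hcl : clique (x :: s))
      by exact (clique_suffix _ _ (HBx a b Ha Hb Hab) (f_clique a b Hab)).
    inversion Hcl. assumption.
Qed.

End SuffixSystem.

End CliqueGraph.

(* Junk value (0, 1) when j <= i. *)
Definition shift_pair (i j : nat) : vert (shift_graph 1) :=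
  match lt_dec i j with
  | left H => exist (fun p : nat * nat => fst p < snd p) (i, j) H
  | right _ => exist (fun p : nat * nat => fst p < snd p) (0, 1) Nat.lt_0_1
  end.

Lemma shift_pair_adj i j k :
  i < j -> j < k -> adj (shift_graph 1) (shift_pair i j) (shift_pair j k).
Proof.
  intros Hij Hjk. left. unfold shift_pair.
  destruct (lt_dec i j); [|lia]. destruct (lt_dec j k); [|lia]. reflexivity.
Qed.

Lemma shift_hom_clique_graph_Komega (G : graph) :
  hom (shift_graph 1) (clique_graph G) -> contains_subgraph G Komega.
Proof.
  intros [g Hg]. apply (suffix_system_Komega G (fun i j => proj1_sig (g (shift_pair i j)))).
  - intros i j _. apply proj2_sig.
  - intros i j k Hij Hjk. apply (Hg (shift_pair i j) (shift_pair j k)), shift_pair_adj; assumption.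
Qed.

Inductive triangle_vertex : Type := T0 | T1 | T2.

Lemma triangle_adj_sym (x y : triangle_vertex) : x <> y -> y <> x.
Proof. congruence. Qed.

Lemma triangle_adj_irrefl (x : triangle_vertex) : ~ x <> x.
Proof. congruence. Qed.

Definition triangle : graph :=
  Graph triangle_vertex (fun x y => x <> y) triangle_adj_sym triangle_adj_irrefl.

Lemma triangle_countable : countable_graph triangle.
Proof.
  exists (fun x => match x with T0 => 0 | T1 => 1 | T2 => 2 end).
  intros [] [] E; simpl in E; congruence.
Qed.

Lemma triangle_colorable : finitely_colorable triangle.
Proof.
  exists triangle_vertex, [T0; T1; T2], (fun x => x). split; [intros []; simpl; auto|auto].
Qed.

Lemma triangle_odd_closed_walk : odd_closed_walk triangle 3.
Proof.
  split; [exists 1; reflexivity|]. exists T0.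
  apply (walk_cons (G := triangle) (y := T1)); [discriminate|].
  apply (walk_cons (G := triangle) (y := T2)); [discriminate|].
  apply (walk_cons (G := triangle) (y := T0)); [discriminate|constructor].
Qed.

Lemma independent_shift_graph (G : graph) n :
  finitely_colorable G -> odd_closed_walk G n -> independent G (shift_graph n).
Proof.
  intros Hcol Hn. split.
  - intros Hh. apply (odd_closed_walk_hom G _ n Hh), shift_graph_odd_girth in Hn. lia.
  - intros Hh. exact (shift_graph_not_colorable n (finitely_colorable_hom _ _ Hh Hcol)).
Qed.

Lemma independent_clique_graph (G : graph) :
  ~ contains_subgraph G Komega -> hom (shift_graph 1) G -> independent G (clique_graph G).
Proof.
  intros HK HS. split.
  - intros Hh. exact (HK (shift_hom_clique_graph_Komega G (hom_trans _ _ _ HS Hh))).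
  - intros Hh. exact (HK (clique_graph_hom_Komega G Hh)).
Qed.

Lemma independent_triangle (G : graph) :
  ~ finitely_colorable G -> hom G (shift_graph 1) -> independent G triangle.
Proof.
  intros Hcol HS. split.
  - intros Hh. exact (Hcol (finitely_colorable_hom _ _ Hh triangle_colorable)).
  - intros Hh. assert (H3 := triangle_odd_closed_walk).
    apply (odd_closed_walk_hom _ _ 3 (hom_trans _ _ _ Hh HS)), shift_graph_odd_girth in H3. lia.
Qed.

Theorem theorem1 (G : graph) (HG : countable_graph G) :
  (exists G' : graph, countable_graph G' /\ independent G G') <->
  (~ bipartite G /\ ~ contains_subgraph G Komega).
Proof.
  split.
  - intros [G' [HG' [HGG' HG'G]]]. split.
    + intros Hbip. destruct (bipartite_hom_or_hom_back G G' Hbip); contradiction.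
    + intros HK. apply HG'G.
      exact (hom_trans _ _ _ (countable_hom_Komega G' HG') (contains_subgraph_hom _ _ HK)).
  - intros [Hnb HK]. destruct (classic (finitely_colorable G)) as [Hcol|Hcol].
    + destruct (not_bipartite_odd_closed_walk G Hnb) as [n Hn].
      exists (shift_graph n). split; [apply shift_graph_countable|].
      exact (independent_shift_graph G n Hcol Hn).
    + destruct (classic (hom (shift_graph 1) G)) as [HS|HS].
      { exists (clique_graph G). split; [apply clique_graph_countable, HG|].
        exact (independent_clique_graph G HK HS). }
      destruct (classic (hom G (shift_graph 1))) as [HGS|HGS].
      { exists triangle. split; [exact triangle_countable|].
        exact (independent_triangle G Hcol HGS). }
      exists (shift_graph 1). split; [apply shift_graph_countable|split; assumption].
Qed.
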